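(* Let $k\ge2$. For all $f:\Xi_k\to\mathbb R$, $\mathcal S_k\widehat{\mathcal L}_k(f\circ\Phi_k)=(L_kf)\circ\Phi_k$.
   Context: $V$ is a finite set with symmetric non-negative weights $c_{xy}=c_{yx}\ge0$, $\alpha=(\alpha_x)$ positive. $\Xi_k:=\{\eta\in\mathbb N_0^V:\sum_x\eta_x=k\}$, $\Phi_k(\mathbf x)=\sum_{i=1}^k\delta_{x_i}$ for $\mathbf x\in V^k$. $\mathcal S_k\varphi(\mathbf x)=\frac1{k!}\sum_{\sigma\in S_k}\varphi(x_{\sigma(1)},\dots,x_{\sigma(k)})$. $\widehat{\mathcal L}_k\varphi(\mathbf x)=\sum_{x,y}c_{xy}\sum_{i=1}^k\delta_{x,x_i}(\alpha_y+2\sum_{j=1}^{i-1}\delta_{y,x_j})(\varphi(\mathbf x_i^y)-\varphi(\mathbf x))$, with $\mathbf x_i^y$ being $\mathbf x$ with $i$-th coordinate replaced by $y$. $L_kf(\eta)=\sum_x\eta_x\sum_yc_{xy}(\alpha_y+\eta_y)(f(\eta-\delta_x+\delta_y)-f(\eta))$, where $\eta-\delta_x+\delta_y$ moves one particle from $x$ to $y$. *)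

From mathcomp Require Import all_boot all_order all_fingroup all_algebra.
From mathcomp Require Import reals.
Set Implicit Arguments. Unset Strict Implicit. Unset Printing Implicit Defensive.
Import Order.TTheory GRing.Theory Num.Theory.

Section Defs.
Variable V : finType.

Definition Xi (k : nat) := {eta : {ffun V -> nat} | \sum_(z : V) eta z == k}.

Definition Phi_fun (k : nat) (x : {ffun 'I_k -> V}) : {ffun V -> nat} :=
  [ffun z => \sum_(i < k) (x i == z : nat)].

Lemma Phi_fun_sum (k : nat) (x : {ffun 'I_k -> V}) :
  \sum_(z : V) Phi_fun x z == k.
Proof.
apply/eqP.
rewrite /Phi_fun.
under eq_bigr do rewrite ffunE.
rewrite exchange_big /=.
rewrite (eq_bigr (fun _ => 1)); last first.
  move=> i _; rewrite (bigD1 (x i)) //= eqxx big1 ?addn0 //.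
  by move=> z /negbTE; rewrite eq_sym => ->.
by rewrite sum1_card card_ord.
Qed.

Definition Phi (k : nat) (x : {ffun 'I_k -> V}) : Xi k :=
  exist _ (Phi_fun x) (Phi_fun_sum x).

(* eta - delta_x + delta_y (moving one particle from x to y); only used
   when eta_x > 0, otherwise (irrelevant, multiplied by eta_x = 0) eta itself *)
Definition move_fun (eta : {ffun V -> nat}) (x y : V) : {ffun V -> nat} :=
  if 0 < eta x then [ffun z => eta z - (z == x) + (z == y)] else eta.

Lemma move_fun_sum (k : nat) (eta : Xi k) (x y : V) :
  \sum_(z : V) move_fun (val eta) x y z == k.
Proof.
case: eta => e /= /eqP He; rewrite /move_fun.
case: ifP => [hx|_]; last by rewrite He.
under eq_bigr do rewrite ffunE.
rewrite big_split /= -He.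
have -> : \sum_(z : V) (z == y : nat) = 1.
  rewrite (bigD1 y) //= eqxx big1 ?addn0 //.
  by move=> z hz; rewrite (negbTE hz).
apply/eqP; rewrite [X in _ = X](bigD1 x) //= [X in X + _ = _](bigD1 x) //= eqxx.
rewrite (eq_bigr (fun z => e z)); last by move=> z hz; rewrite (negbTE hz) subn0.
by rewrite addnAC subn1 addn1 prednK.
Qed.

Definition move (k : nat) (eta : Xi k) (x y : V) : Xi k :=
  exist _ (move_fun (val eta) x y) (move_fun_sum eta x y).

Variable R : realType.
Local Open Scope ring_scope.

Definition Lk (k : nat) (c : V -> V -> R) (alpha : V -> R)
    (f : Xi k -> R) (eta : Xi k) : R :=
  \sum_(x : V) ((val eta x)%:R *
     \sum_(y : V) c x y * (alpha y + (val eta y)%:R) *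
        (f (move eta x y) - f eta)).

Definition repl (k : nat) (x : {ffun 'I_k -> V}) (i : 'I_k) (y : V)
  : {ffun 'I_k -> V} := [ffun j => if j == i then y else x j].

Definition hatLk (k : nat) (c : V -> V -> R) (alpha : V -> R)
    (phi : {ffun 'I_k -> V} -> R) (x : {ffun 'I_k -> V}) : R :=
  \sum_(a : V) \sum_(b : V) c a b *
    \sum_(i < k) ((a == x i)%:R *
      (alpha b + 2 * \sum_(j < k | (j < i)%N) (b == x j)%:R) *
      (phi (repl x i b) - phi x)).

Definition Sk (k : nat) (phi : {ffun 'I_k -> V} -> R) (x : {ffun 'I_k -> V}) : R :=
  (k`!%:R)^-1 * \sum_(s : 'S_k) phi [ffun i => x (s i)].

End Defs.

From mathcomp Require Import all_boot all_order all_fingroup all_algebra.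
From mathcomp Require Import reals ring.
Import GRing.Theory Num.Theory.
Set Implicit Arguments. Unset Strict Implicit.
Local Open Scope ring_scope.

(* Expanding the indicators, [hatLk (f \o Phi) x] splits into a free-jump part
   [sum_i sum_b c(x_i,b) alpha_b (f(eta^(x_i -> b)) - f eta)], which depends on
   [x] only through [eta = Phi x], and twice a sum over the ordered pairs
   [j < i] of [c(x_i,x_j) (f(eta^(x_i -> x_j)) - f eta)].  Averaging over all
   permutations turns the ordered pairs into all pairs [(i,j)]; the diagonal
   terms vanish because a jump from a site to itself does nothing.  Grouping
   the particles by site then gives exactly [Lk f eta]. *)

Lemma sum_delta_mull (I : finType) (R : pzSemiRingType) (i0 : I) (F : I -> R) :
  \sum_i (i == i0)%:R * F i = F i0.
Proof.
rewrite (eq_bigr (fun i => if i == i0 then F i else 0)) => [|i _].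
  by rewrite -big_mkcond big_pred1_eq.
by case: eqP; rewrite ?mul1r ?mul0r.
Qed.

Lemma sum_ltn_pairs_sym (R : nmodType) k (T : 'I_k -> 'I_k -> R) :
  (forall i j, T i j = T j i) -> (forall i, T i i = 0) ->
  (\sum_(i < k) \sum_(j < k | (j < i)%N) T i j) *+ 2 = \sum_i \sum_j T i j.
Proof.
move=> T_sym T0; rewrite mulr2n.
have upper : \sum_(i < k) \sum_(j < k | (j < i)%N) T i j
          = \sum_(i < k) \sum_(j < k) (if (i < j)%N then T i j else 0).
  under eq_bigr do rewrite big_mkcond /=.
  rewrite exchange_big; apply: eq_bigr => i _; apply: eq_bigr => j _.
  by rewrite T_sym.
rewrite {2}upper; under eq_bigr do rewrite big_mkcond /=.
rewrite -big_split /=; apply: eq_bigr => i _; rewrite -big_split /=.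
by apply: eq_bigr => j _; case: ltngtP => [_|_|/val_inj ->]; rewrite ?T0 ?addr0 ?add0r.
Qed.

Lemma sum_perm_ltn_pairs (R : nmodType) k (G : 'I_k -> 'I_k -> R) :
  (forall i, G i i = 0) ->
  (\sum_(s : 'S_k) \sum_(i < k) \sum_(j < k | (j < i)%N) G (s i) (s j)) *+ 2
    = (\sum_i \sum_j G i j) *+ k`!.
Proof.
move=> G0; pose T i j := \sum_(s : 'S_k) G (s i) (s j).
have T_sym i j : T i j = T j i.
  rewrite /T (reindex_inj (mulgI (tperm i j))) /=.
  by apply: eq_bigr => s _; rewrite !permM tpermL tpermR.
have T0 i : T i i = 0 by rewrite /T big1.
rewrite exchange_big; under eq_bigr do rewrite exchange_big.
rewrite (sum_ltn_pairs_sym T_sym T0) /T.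
under eq_bigr do rewrite exchange_big.
rewrite exchange_big -(card_Sn k) -sumr_const; apply: eq_bigr => s _.
rewrite [RHS](reindex_inj (@perm_inj _ s)); apply: eq_bigr => i _.
by rewrite [RHS](reindex_inj (@perm_inj _ s)).
Qed.

Section Configurations.
Variable V : finType.

Lemma Phi_perm k (x : {ffun 'I_k -> V}) (s : 'S_k) :
  Phi [ffun i => x (s i)] = Phi x.
Proof.
apply: val_inj; apply/ffunP => z; rewrite !ffunE.
rewrite [RHS](reindex_inj (@perm_inj _ s)).
by apply: eq_bigr => i _; rewrite ffunE.
Qed.

Lemma Phi_repl k (x : {ffun 'I_k -> V}) i b :
  Phi (repl x i b) = move (Phi x) (x i) b.
Proof.
apply: val_inj; rewrite /= /move_fun /= [X in (0 < X)%N]ffunE (bigD1 i) //= eqxx.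
apply/ffunP => z; rewrite !ffunE (bigD1 i) //= (bigD1 i (P := predT)) //= ffunE eqxx.
rewrite (eq_bigr (fun j => (x j == z : nat))) => [|j /negbTE ji]; last first.
  by rewrite ffunE ji.
by rewrite (eq_sym z (x i)) addKn (eq_sym z b) addnC.
Qed.

Lemma move_id k (eta : Xi V k) a : move eta a a = eta.
Proof.
apply: val_inj; rewrite /= /move_fun; case: ifP => // eta_a.
by apply/ffunP => z; rewrite ffunE; case: eqP => [->|_]; rewrite ?subnK ?subn0 ?addn0.
Qed.

Lemma sum_Phi_mull (R : pzSemiRingType) k (x : {ffun 'I_k -> V}) (H : V -> R) :
  \sum_a (val (Phi x) a)%:R * H a = \sum_(p < k) H (x p).
Proof.
under eq_bigr do rewrite ffunE natr_sum mulr_suml.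
rewrite exchange_big; apply: eq_bigr => p _.
by under eq_bigr do rewrite eq_sym; rewrite sum_delta_mull.
Qed.

Variables (R : realType) (c : V -> V -> R) (alpha : V -> R).

Lemma hatLkE k (phi : {ffun 'I_k -> V} -> R) (y : {ffun 'I_k -> V}) :
  hatLk c alpha phi y =
  \sum_(i < k) \sum_b c (y i) b * (alpha b + 2 * \sum_(j < k | (j < i)%N) (b == y j)%:R)
                * (phi (repl y i b) - phi y).
Proof.
rewrite /hatLk; under eq_bigr do under eq_bigr do rewrite mulr_sumr.
rewrite exchange_big; under eq_bigr do rewrite exchange_big.
rewrite exchange_big; apply: eq_bigr => i _; apply: eq_bigr => b _.
rewrite -[RHS](sum_delta_mull (y i) (fun a => c a b * _ * _)).
by apply: eq_bigr => a _; ring.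
Qed.

Lemma hatLk_split k (phi : {ffun 'I_k -> V} -> R) (y : {ffun 'I_k -> V}) :
  hatLk c alpha phi y =
  \sum_(i < k) \sum_b c (y i) b * alpha b * (phi (repl y i b) - phi y)
  + (\sum_(i < k) \sum_(j < k | (j < i)%N)
       c (y i) (y j) * (phi (repl y i (y j)) - phi y)) *+ 2.
Proof.
rewrite hatLkE -sumrMnl -big_split; apply: eq_bigr => i _ /=.
set D := fun b => phi (repl y i b) - phi y.
have split_rate b :
    c (y i) b * (alpha b + 2 * \sum_(j < k | (j < i)%N) (b == y j)%:R) * D b
    = c (y i) b * alpha b * D b
      + \sum_(j < k | (j < i)%N) (b == y j)%:R * (2 * (c (y i) b * D b)).
  by rewrite -mulr_suml; ring.
rewrite (eq_bigr _ (fun b _ => split_rate b)) big_split; congr (_ + _).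
rewrite exchange_big -sumrMnl; apply: eq_bigr => j _.
by rewrite sum_delta_mull mulr_natl.
Qed.

Definition jump_increment k (f : Xi V k -> R) (eta : Xi V k) a b : R :=
  f (move eta a b) - f eta.

Lemma Lk_Phi k (f : Xi V k -> R) (x : {ffun 'I_k -> V}) :
  Lk c alpha f (Phi x) =
  \sum_(p < k) \sum_b c (x p) b * alpha b * jump_increment f (Phi x) (x p) b
  + \sum_(p < k) \sum_(q < k) c (x p) (x q) * jump_increment f (Phi x) (x p) (x q).
Proof.
rewrite /Lk sum_Phi_mull -big_split; apply: eq_bigr => p _.
rewrite -(sum_Phi_mull x (fun b => c (x p) b * jump_increment f (Phi x) (x p) b)).
by rewrite -big_split; apply: eq_bigr => b _; rewrite /= /jump_increment; ring.
Qed.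

End Configurations.

Theorem propositionA4 (V : finType) (R : realType)
  (c : V -> V -> R) (alpha : V -> R)
  (c_sym : forall x y, c x y = c y x)
  (c_ge0 : forall x y, 0 <= c x y)
  (alpha_gt0 : forall x, 0 < alpha x)
  (k : nat) (hk : (2 <= k)%N) (f : Xi V k -> R) :
  forall x : {ffun 'I_k -> V},
    Sk (hatLk c alpha (fun z => f (Phi z))) x = Lk c alpha f (Phi x).
Proof.
move=> x; set eta := Phi x.
pose jumps := \sum_(p < k) \sum_b c (x p) b * alpha b * jump_increment f eta (x p) b.
pose pair p q := c (x p) (x q) * jump_increment f eta (x p) (x q).
have hatLk_perm (s : 'S_k) :
    hatLk c alpha (fun z => f (Phi z)) [ffun i => x (s i)]
    = jumps + (\sum_(i < k) \sum_(j < k | (j < i)%N) pair (s i) (s j)) *+ 2.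
  rewrite hatLk_split Phi_perm; congr (_ + _ *+ 2).
    rewrite /jumps [RHS](reindex_inj (@perm_inj _ s)).
    by apply: eq_bigr => i _; apply: eq_bigr => b _; rewrite Phi_repl Phi_perm !ffunE.
  by apply: eq_bigr => i _; apply: eq_bigr => j _; rewrite Phi_repl Phi_perm !ffunE.
have pair_diag p : pair p p = 0 by rewrite /pair /jump_increment move_id subrr mulr0.
rewrite /Sk (eq_bigr _ (fun s _ => hatLk_perm s)) big_split /= sumr_const card_Sn.
rewrite sumrMnl sum_perm_ltn_pairs // Lk_Phi -mulrnDl -(mulr_natl (jumps + _)) mulKf //.
by rewrite pnatr_eq0 -lt0n fact_gt0.
Qed.
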